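(* Let $a\in\mathbb{R}$ and let the polynomials $H_m(z)$ be defined by the generating function \[ \sum_{m=0}^{\infty}H_m(z)t^m=\frac{1}{1+t+at^2+zt^3}. \] If $-1\le a\le 1/3$, then for every $m$ the zeros of $H_m(z)$ lie in the real interval \[ I_a=\left(-\infty,\ \frac{-2+9a-2\sqrt{(1-3a)^3}}{27}\right], \] and $\bigcup_{m=0}^{\infty}\mathcal{Z}(H_m)$ is dense in $I_a$.
   Context: $\mathcal{Z}(H_m)$ denotes the set of zeros of $H_m(z)$. Convention: the zeros of the constant zero polynomial are considered real (and the statement about their location is vacuous). *)

From HB Require Import structures.
From mathcomp Require Import all_boot all_order all_algebra.
From mathcomp Require Import reals.
From mathcomp Require Import complex.
Set Implicit Arguments. Unset Strict Implicit. Unset Printing Implicit Defensive.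
Import Order.TTheory GRing.Theory Num.Theory.
Local Open Scope ring_scope.

(* Hs a m = (H_m, H_{m-1}, H_{m-2}) with H_{-1} = H_{-2} = 0.  The identity
   (1 + t + a t^2 + z t^3) * \sum_m H_m t^m = 1 is equivalent to
   H_0 = 1 and H_m + H_{m-1} + a H_{m-2} + z H_{m-3} = 0 for m >= 1. *)
Fixpoint Hs (R : nzRingType) (a : R) (m : nat) : {poly R} * {poly R} * {poly R} :=
  match m with
  | 0 => (1, 0, 0)
  | m'.+1 =>
      let: (h0, h1, h2) := Hs a m' in
      (- h0 - a%:P * h1 - 'X * h2, h0, h1)
  end.

Definition H (R : nzRingType) (a : R) (m : nat) : {poly R} := (Hs a m).1.1.

Definition Ia_end (R : rcfType) (a : R) : R :=
  (-2 + 9 * a - 2 * Num.sqrt ((1 - 3 * a) ^+ 3)) / 27.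

From HB Require Import structures.
From mathcomp Require Import all_boot all_order all_algebra.
From mathcomp Require Import reals complex polyrcf trigo.
From mathcomp Require Import ring lra zify.
Import Order.TTheory GRing.Theory Num.Theory.
Local Open Scope ring_scope.
Set Implicit Arguments. Unset Strict Implicit. Unset Printing Implicit Defensive.

(* With s = -1 - 2u, r = rho2 a u = 4u^2 + 2u + a and z = zeta a u = (1 + 2u) r,
   the denominator factors as 1 + t + a t^2 + z t^3 = (1 - s t)(1 - 2u t + r t^2),
   so partial fractions express H_m(z) through s^m and the Lucas sequence
   U_n(2u, r); writing u = rho cos theta with rho^2 = r, U_n = rho^(n-1)
   sin(n theta) / sin theta.  For u below u0 = -(1 + sqrt(1 - 3a))/3 one has
   |s| < rho and 2pi/3 < theta <= pi, so at theta = j pi/(m+2) the sign of H_m(z)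
   is (-1)^(j+1).  As u increases to u0, z increases to the right end of I_a and
   theta increases to pi; hence the grid angles in (2pi/3, pi) produce deg H_m
   sign changes of H_m on I_a (one of them at -oo when m is not 2 mod 3), and
   all zeros are real and lie in I_a.  An interval of I_a corresponds to an
   interval of angles, which contains two consecutive grid angles once m is
   large: this gives density. *)

Section Recurrence.
Variables (R : nzRingType) (a : R).

Lemma HsS m : Hs a m.+1 =
  let: (h0, h1, h2) := Hs a m in (- h0 - a%:P * h1 - 'X * h2, h0, h1).
Proof. by []. Qed.

Lemma HsE m : Hs a m.+2 = (H a m.+2, H a m.+1, H a m).
Proof. by elim: m => // m IH; rewrite HsS IH [H a m.+3]/H HsS IH. Qed.

Lemma H0 : H a 0 = 1. Proof. by []. Qed.
Lemma H1 : H a 1 = -1. Proof. by rewrite /H /= !mulr0 !subr0. Qed.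
Lemma H2 : H a 2 = 1 - a%:P. Proof. by rewrite /H /= !mulr0 !subr0 mulr1 opprK. Qed.

Lemma H_rec m : H a m.+3 = - H a m.+2 - a%:P * H a m.+1 - 'X * H a m.
Proof. by rewrite [H a m.+3]/H HsS HsE. Qed.

Lemma coef_H_rec m i :
  (H a m.+3)`_i.+1 = - (H a m.+2)`_i.+1 - a * (H a m.+1)`_i.+1 - (H a m)`_i.
Proof. by rewrite H_rec !coefE. Qed.

End Recurrence.

Lemma horner_H_unique (R : comNzRingType) (a z c : R) (f : nat -> R) :
  f 0%N = c -> f 1%N = - c -> f 2%N = (1 - a) * c ->
  (forall m, f m.+3 = - f m.+2 - a * f m.+1 - z * f m) ->
  forall m, f m = (H a m).[z] * c.
Proof.
move=> f0 f1 f2 fS m.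
suff [] : [/\ f m = (H a m).[z] * c, f m.+1 = (H a m.+1).[z] * c
  & f m.+2 = (H a m.+2).[z] * c] by [].
elim: m => [|m [e0 e1 e2]]; first by rewrite H1 H2 !hornerE f0 f1 f2; split; ring.
by split => //; rewrite fS e2 e1 e0 H_rec !(hornerD, hornerN, hornerM, hornerC, hornerX); ring.
Qed.

Lemma size_lead_coef_leS (R : nzRingType) (p : {poly R}) n :
  (size p <= n.+1)%N -> p`_n != 0 -> size p = n.+1 /\ lead_coef p = p`_n.
Proof.
move=> sp pn0; suff sz : size p = n.+1 by rewrite lead_coefE sz.
by apply/eqP; rewrite eqn_leq sp ltnNge; apply: contra pn0 => /leq_sizeP->.
Qed.

Section Degree.
Variables (R : comNzRingType) (a : R).

Lemma size_H_rec m n : (size (H a m.+2) <= n.+1)%N -> (size (H a m.+1) <= n.+1)%N ->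
  (size (H a m) <= n)%N -> (size (H a m.+3) <= n.+1)%N.
Proof.
move=> /leq_sizeP s2 /leq_sizeP s1 /leq_sizeP s0.
by apply/leq_sizeP => -[|i] // lt_ni; rewrite coef_H_rec s2 // s1 // s0 // mulr0 !subr0 oppr0.
Qed.

Lemma size_coef_H k :
  [/\ size (H a (3 * k)) <= k.+1, size (H a (3 * k).+1) <= k.+1
    & size (H a (3 * k).+2) <= k.+1]%N /\
  [/\ (H a (3 * k))`_k = (-1) ^+ k, (H a (3 * k).+1)`_k = (-1) ^+ k.+1 * k.+1%:R
    & (H a (3 * k).+2)`_k *+ 2 = (-1) ^+ k * k.+1%:R * (k.+2%:R - a *+ 2)].
Proof.
elim: k => [|k [[s0 s1 s2] [c0 c1 c2]]].
  rewrite muln0 H0 H1 H2 -polyC1 -!polyCN -polyCD !size_polyC !coefC !leq_b1 /=.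
  by split; split => //; rewrite ?expr1 ?mulr1 // !mulr2n; ring.
have -> : (3 * k.+1 = (3 * k).+3)%N by rewrite mulnS add3n.
have s3 := size_H_rec (leqW s2) (leqW s1) s0.
have s4 := size_H_rec s3 (leqW s2) s1.
have s5 := size_H_rec s4 s3 s2.
move/leq_sizeP in s1; move/leq_sizeP in s2.
have c3 : (H a (3 * k).+3)`_k.+1 = (-1) ^+ k.+1.
  by rewrite coef_H_rec s2 ?s1 // c0 exprS; ring.
have c4 : (H a (3 * k).+4)`_k.+1 = (-1) ^+ k.+2 * k.+2%:R.
  by rewrite coef_H_rec c3 s2 // c1 !exprS -[k.+2%:R]natr1; ring.
split; split => //.
rewrite coef_H_rec c4 c3 !mulrnBl c2 !exprS !mulr2n.
rewrite -[k.+3%:R]natr1 -[k.+2%:R]natr1 -[k.+1%:R]natr1; ring.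
Qed.

End Degree.

(** * A closed form through Lucas sequences *)

Definition rho2 (R : nzRingType) (a u : R) : R := 4 * u ^+ 2 + 2 * u + a.
Definition zeta (R : nzRingType) (a u : R) : R := (1 + 2 * u) * rho2 a u.

Section Lucas.
Variables (R : comNzRingType) (p q : R).

Fixpoint lucasU n : R :=
  if n is n'.+1 then
    if n' is n''.+1 then p * lucasU n' - q * lucasU n'' else 1
  else 0.

Lemma lucasU0 : lucasU 0 = 0. Proof. by []. Qed.
Lemma lucasU1 : lucasU 1 = 1. Proof. by []. Qed.
Lemma lucasUSS n : lucasU n.+2 = p * lucasU n.+1 - q * lucasU n. Proof. by []. Qed.

End Lucas.

Lemma H_zeta_lucasU (R : comNzRingType) (a u : R) m :
  (H a m).[zeta a u] * ((-1 - 2 * u) ^+ 2 - 2 * u * (-1 - 2 * u) + rho2 a u) =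
  (-1 - 2 * u) ^+ m.+2 - (-1 - 2 * u) * lucasU (2 * u) (rho2 a u) m.+2
    + rho2 a u * lucasU (2 * u) (rho2 a u) m.+1.
Proof.
pose s := -1 - 2 * u; pose U := lucasU (2 * u) (rho2 a u).
pose f n := s ^+ n.+2 - s * U n.+2 + rho2 a u * U n.+1.
symmetry; apply: (@horner_H_unique _ a _ _ f) => [||| n]; rewrite /f /U /s.
- by rewrite !lucasUSS lucasU1 lucasU0; ring.
- by rewrite !lucasUSS lucasU1 lucasU0 /rho2; ring.
- by rewrite !lucasUSS lucasU1 lucasU0 /rho2; ring.
- by rewrite !lucasUSS !exprS /zeta /rho2; ring.
Qed.

(** * Sign changes of real polynomials *)

Section SignChanges.
Variable R : rcfType.
Implicit Types (p : {poly R}) (x y : R).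

Definition sign_change p : rel R := fun x y => (x < y) && (p.[x] * p.[y] < 0).

Lemma roots_of_sign_changes p x s : path (sign_change p) x s ->
  exists rs, [/\ uniq rs, size rs = size s, all (root p) rs
                & {in rs, forall r, r <= last x s}].
Proof.
elim/last_ind: s => [|s y IH]; first by exists [::].
rewrite rcons_path last_rcons size_rcons => /andP[/IH[rs [urs <- rrs brs]]].
case/andP=> lt_sy /(poly_ivtoo (ltW lt_sy))[r]; rewrite in_itv /= => /andP[lt_sr lt_ry] rr.
exists (r :: rs); rewrite /= rr urs rrs andbT; split => //.
- by apply/negP => /brs; rewrite leNgt lt_sr.
- move=> v; rewrite inE => /predU1P[-> | /brs le_v]; first exact: ltW.
  exact: le_trans le_v (ltW lt_sy).
Qed.

Lemma complex_roots_of_sign_changes p x s :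
  p != 0 -> (size p <= (size s).+1)%N -> path (sign_change p) x s ->
  forall w, root (map_poly (real_complex R) p) w ->
  exists2 r : R, w = (r%:C)%C & r <= last x s.
Proof.
move=> p0 sp /roots_of_sign_changes[rs [urs srs rrs brs]] w.
have {}sp : size p = (size rs).+1.
  by apply/eqP; rewrite eqn_leq (max_poly_roots p0 rrs urs) srs sp.
rewrite (all_roots_prod_XsubC sp rrs _) ?uniq_rootsE // map_polyZ rootZ ?fmorph_eq0 ?lead_coef_eq0 //.
rewrite rmorph_prod /= (eq_bigr (fun r => 'X - (r%:C)%C%:P)) => [|r _]; last first.
  by rewrite map_polyXsubC.
rewrite -(big_map _ xpredT (fun z => 'X - z%:P)) root_prod_XsubC => /mapP[r rrs_r ->].
by exists r => //; exact: brs.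
Qed.

Lemma sgp_minfty_left p B : p != 0 ->
  exists2 y, y < B & Num.sg p.[y] = sgp_minfty p.
Proof.
move=> p0; exists (Num.min (B - 1) (- cauchy_bound p)).
  by rewrite gt_min gtrBl ltr01.
by rewrite (sgp_minftyP (le_cauchy_bound p0)) // in_itv /= ge_min lexx orbT.
Qed.

End SignChanges.

Lemma mul_lt0_alt_sign (R : realDomainType) j (x y : R) :
  (-1) ^+ j * x < 0 -> (-1) ^+ j.+1 * y < 0 -> x * y < 0.
Proof.
rewrite exprS mulN1r mulNr oppr_lt0 -signr_odd.
case: (odd j); rewrite /= ?expr1 ?expr0 ?mulN1r ?mul1r ?oppr_lt0 ?oppr_gt0 => xj yj.
- by rewrite pmulr_rlt0.
- by rewrite nmulr_rlt0.
Qed.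

Lemma sgp_minfty_H (R : realFieldType) (a : R) d r : (r < 2)%N ->
  sgp_minfty (H a (3 * d + r)) = (-1) ^+ r.
Proof.
have [[s0 s1 _] [c0 c1 _]] := size_coef_H a d.
case: r => [|[|//]] _; rewrite ?addn0 ?addn1 /sgp_minfty.
  have c0_neq0 : (H a (3 * d))`_d != 0 by rewrite c0 signr_eq0.
  have [-> ->] := size_lead_coef_leS s0 c0_neq0.
  by rewrite c0 /= -expr2 sqrr_sign sgr1.
have c1_neq0 : (H a (3 * d).+1)`_d != 0 by rewrite c1 mulf_neq0 ?signr_eq0 ?pnatr_eq0.
have [-> ->] := size_lead_coef_leS s1 c1_neq0.
rewrite c1 /= exprS mulN1r mulNr mulrN mulrA -expr2 sqrr_sign mul1r sgrN.
by rewrite gtr0_sg ?ltr0Sn.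
Qed.

Lemma H_sign_minfty (R : rcfType) (a : R) d r B : (r < 2)%N ->
  exists2 y, y < B & 0 < (-1) ^+ r * (H a (3 * d + r)).[y].
Proof.
move=> lt_r2; have sH := sgp_minfty_H a d lt_r2.
have H_neq0 : H a (3 * d + r) != 0.
  by apply: contra_eq_neq sH => ->; rewrite /sgp_minfty lead_coef0 mulr0 sgr0 eq_sym signr_eq0.
have [y lt_y sy] := sgp_minfty_left B H_neq0; exists y => //.
by rewrite -sgr_cp0 sgrM sgrX sgrN1 sy sH -expr2 sqrr_sign.
Qed.

Section Trigonometry.
Variable R : realType.
Implicit Types (t : R) (j n : nat).

Lemma sin_pi_mulrn j : sin (pi *+ j) = 0 :> R.
Proof. by elim: j => [|j IH]; rewrite ?mulr0n ?sin0 // mulrSr sinDpi IH oppr0. Qed.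

Lemma cos_pi_mulrn j : cos (pi *+ j) = (-1) ^+ j :> R.
Proof. by elim: j => [|j IH]; rewrite ?mulr0n ?cos0 // mulrSr cosDpi IH exprS mulN1r. Qed.

Lemma sin_mulrnSS t n :
  sin (t *+ n.+2) = 2 * cos t * sin (t *+ n.+1) - sin (t *+ n).
Proof.
have -> : t *+ n = t *+ n.+1 - t by rewrite mulrS addrC addrK.
by rewrite mulrS addrC sinD sinB; ring.
Qed.

Lemma cos_2pi3 : cos (pi *+ 2 / 3) = - (1 / 2) :> R.
Proof.
have pi_gt0 := pi_gt0 R; pose c : R := cos (pi / 3).
have c_gt0 : 0 < c by apply: cos_gt0_pihalf; apply/andP; split; lra.
have cNc : cos (pi *+ 2 / 3) = - c.
  have -> : pi *+ 2 / 3 = pi - pi / 3 :> R by rewrite mulr2n; field.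
  by rewrite cosB cospi sinpi /c; ring.
have c2c : cos (pi *+ 2 / 3) = c ^+ 2 *+ 2 - 1.
  by rewrite -cos_mulr2n; congr cos; rewrite !mulr2n; field.
rewrite cNc; move: c2c; rewrite cNc; nra.
Qed.

Lemma lucasU_trig (rho t : R) n :
  rho * lucasU (2 * (rho * cos t)) (rho ^+ 2) n * sin t = rho ^+ n * sin (t *+ n).
Proof.
pose U := lucasU (2 * (rho * cos t)) (rho ^+ 2).
suff [] : rho * U n * sin t = rho ^+ n * sin (t *+ n) /\
  rho * U n.+1 * sin t = rho ^+ n.+1 * sin (t *+ n.+1) by [].
elim: n => [|n [e0 e1]]; first by rewrite /U lucasU0 lucasU1 mulr0n sin0; split; ring.
split => //; rewrite /U lucasUSS -/U sin_mulrnSS.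
transitivity (2 * (rho * cos t) * (rho * U n.+1 * sin t) - rho ^+ 2 * (rho * U n * sin t)).
  by ring.
by rewrite e0 e1 !exprS; ring.
Qed.

End Trigonometry.

Definition grid {R : realType} (m j : nat) : R := pi *+ j / m.+2%:R.

Section Grid.
Context {R : realType}.
Implicit Types (m j : nat).

Lemma grid_mulrn m j : grid m j *+ m.+2 = pi *+ j :> R.
Proof. by rewrite -mulr_natr divfK ?pnatr_eq0. Qed.

Lemma grid_ltS m j : grid m j < grid m j.+1 :> R.
Proof.
rewrite ltr_pM2r; last by rewrite invr_gt0 ltr0Sn.
by rewrite mulrS ltrDr pi_gt0.
Qed.

Lemma grid_gt m j : (2 * m.+2 < 3 * j)%N -> pi *+ 2 / 3 < grid m j :> R.
Proof.
rewrite -(ltr_nat R) !natrM => lt_mj.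
rewrite ltr_pdivrMr; last by rewrite ltr0n.
rewrite /grid mulrAC ltr_pdivlMr; last by rewrite ltr0Sn.
rewrite -[pi *+ 2]mulr_natr -[pi *+ j]mulr_natr -!mulrA ltr_pM2l; last exact: pi_gt0.
by rewrite [j%:R * _]mulrC.
Qed.

Lemma grid_lt_pi m j : (j < m.+2)%N -> grid m j < pi :> R.
Proof.
move=> lt_jm; rewrite ltr_pdivrMr; last by rewrite ltr0Sn.
rewrite -[pi *+ j]mulr_natr ltr_pM2l; last exact: pi_gt0.
by rewrite ltr_nat.
Qed.

(* Take m + 2 > 2 pi / (y - x) and j = floor (x (m + 2) / pi) + 1. *)
Lemma grid_between (x y : R) : 0 <= x -> x < y ->
  exists m j, x < grid m j /\ grid m j.+1 < y.
Proof.
move=> x_ge0 lt_xy; have pi_gt0 := pi_gt0 R.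
have q_ge0 : 0 <= pi *+ 2 / (y - x).
  by apply: divr_ge0; [exact: mulrn_wge0 (ltW pi_gt0) | rewrite subr_ge0; exact: ltW].
have /andP[_ lt_m] := truncn_itv q_ge0; set m := Num.truncn _ in lt_m.
have N_gt0 : 0 < m.+2%:R :> R by rewrite ltr0Sn.
have hN : pi *+ 2 < m.+2%:R * (y - x).
  have lt_mm : m.+1%:R < m.+2%:R :> R by rewrite ltr_nat.
  by have := lt_trans lt_m lt_mm; rewrite ltr_pdivrMr ?subr_gt0.
have z_ge0 : 0 <= x * m.+2%:R / pi.
  by apply: divr_ge0; [exact: mulr_ge0 x_ge0 (ltW N_gt0) | exact: ltW].
have /andP[tz1 tz2] := truncn_itv z_ge0; set k := Num.truncn _ in tz1 tz2.
have zpi : x * m.+2%:R / pi * pi = x * m.+2%:R by rewrite divfK ?gt_eqF.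
move: tz1 tz2 zpi hN N_gt0; set z := x * m.+2%:R / pi; rewrite -natr1.
set N := m.+2%:R => tz1 tz2 zpi hN N_gt0.
exists m, k.+1; rewrite /grid -[pi *+ k.+1]mulr_natr -[pi *+ k.+2]mulr_natr.
rewrite -[k.+2%:R]natr1 -[k.+1%:R]natr1 -/N.
by split; [rewrite ltr_pdivlMr // | rewrite ltr_pdivrMr //]; nra.
Qed.

End Grid.

(** * The parametrization of I_a *)

Definition u0 (R : realType) (a : R) : R := - (1 + Num.sqrt (1 - 3 * a)) / 3.
Definition rho (R : realType) (a u : R) : R := Num.sqrt (rho2 a u).
Definition theta (R : realType) (a u : R) : R := acos (u / rho a u).

Section Parametrization.
Variables (R : realType) (a : R).
Hypotheses (a_ge : -1 <= a) (a_le : a <= 1 / 3).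
Implicit Types (u v : R).

Lemma u0_param : exists2 t : R, 0 <= t <= 2 & a = (1 - t ^+ 2) / 3 /\ u0 a = - (1 + t) / 3.
Proof.
have ge0 : 0 <= 1 - 3 * a by move: a_le; lra.
have t0 := sqrtr_ge0 (1 - 3 * a); have tt := sqr_sqrtr ge0.
exists (Num.sqrt (1 - 3 * a)); last by rewrite tt; split => //; field.
by rewrite t0 /=; move: a_ge; nra.
Qed.

Lemma u0_le : u0 a <= - (1 / 3).
Proof. by have [t /andP[t0 _] [_ ->]] := u0_param; lra. Qed.

Lemma u0Da_le0 : u0 a + a <= 0.
Proof. by have [t /andP[t0 t2] [-> ->]] := u0_param; nra. Qed.

Lemma rho2_u0 : rho2 a (u0 a) = u0 a ^+ 2.
Proof. by have [t _ [ea ->]] := u0_param; rewrite /rho2 {1}ea; field. Qed.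

Lemma zeta_u0 : zeta a (u0 a) = Ia_end a.
Proof.
have [t /andP[t0 _] [ea eu]] := u0_param.
rewrite /Ia_end /zeta rho2_u0 eu.
have -> : (1 - 3 * a) ^+ 3 = (t ^+ 3) ^+ 2 by rewrite ea; field.
by rewrite sqrtr_sqr ger0_norm ?exprn_ge0 // ea; field.
Qed.

Lemma sqr_lt_rho2 u : u < u0 a -> u ^+ 2 < rho2 a u.
Proof. by have [t /andP[t0 t2] [ea ->]] := u0_param; rewrite /rho2 ea; nra. Qed.

Lemma sqr_le_rho2 u : u <= u0 a -> u ^+ 2 <= rho2 a u.
Proof. by have [t /andP[t0 t2] [ea ->]] := u0_param; rewrite /rho2 ea; nra. Qed.

Lemma rho2_gt0 u : u <= u0 a -> 0 < rho2 a u.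
Proof. by move=> le_u; have := sqr_le_rho2 le_u; have := u0_le; nra. Qed.

Lemma rho2_lt_4sqr u : u <= u0 a -> rho2 a u < 4 * u ^+ 2.
Proof. by rewrite /rho2; have := u0_le; have := u0Da_le0; lra. Qed.

Lemma sqr_1D2u_lt_rho2 u : u < u0 a -> (1 + 2 * u) ^+ 2 < rho2 a u.
Proof. by have [t /andP[t0 t2] [ea ->]] := u0_param; rewrite /rho2 ea; nra. Qed.

Lemma zeta_homo : {in `]-oo, u0 a] &, {homo zeta a : u v / u < v}}.
Proof.
move=> u v; rewrite !in_itv /= => le_u le_v lt_uv; rewrite -subr_gt0.
have [t /andP[t0 t2] [ea eu]] := u0_param.
have -> : zeta a v - zeta a u = (v - u) * (2 * t ^+ 2 + 8 * t * (2 * u0 a - u - v) +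
    8 * ((u0 a - u) ^+ 2 + (u0 a - u) * (u0 a - v) + (u0 a - v) ^+ 2)).
  by rewrite eu /zeta /rho2 ea; field.
by apply: mulr_gt0; nra.
Qed.

Lemma zeta_mono : {in `]-oo, u0 a] &, {mono zeta a : u v / u < v}}.
Proof. exact/leW_mono_in/le_mono_in/zeta_homo. Qed.

Lemma zeta_lt_Ia_end u : u < u0 a -> zeta a u < Ia_end a.
Proof.
move=> lt_u; rewrite -zeta_u0; apply: (zeta_homo _ _ lt_u); rewrite in_itv /=.
  exact: ltW lt_u.
exact: lexx.
Qed.

Lemma sqr_rho2_cross_lt u v : u < v -> v <= u0 a -> u ^+ 2 * rho2 a v < v ^+ 2 * rho2 a u.
Proof.
move=> lt_uv le_v; have := u0_le; have := u0Da_le0; rewrite -subr_gt0 => ? ?.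
have -> : v ^+ 2 * rho2 a u - u ^+ 2 * rho2 a v = (v - u) * (u * (v + a) + v * (u + a)).
  by rewrite /rho2; ring.
by apply: mulr_gt0; nra.
Qed.

Lemma rho_gt0 u : u <= u0 a -> 0 < rho a u.
Proof. by move=> le_u; rewrite sqrtr_gt0 rho2_gt0. Qed.

Lemma sqr_rho u : u <= u0 a -> rho a u ^+ 2 = rho2 a u.
Proof. by move=> le_u; rewrite sqr_sqrtr // ltW // rho2_gt0. Qed.

Lemma div_rho_bounds u : u <= u0 a ->
  [/\ -1 <= u / rho a u, u / rho a u < - (1 / 2) & u < u0 a -> -1 < u / rho a u].
Proof.
move=> le_u; have r_gt0 := rho_gt0 le_u; have rE := sqr_rho le_u.
have := sqr_le_rho2 le_u; have := rho2_lt_4sqr le_u; have := u0_le; rewrite -rE => ? ? ?.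
split=> [||lt_u]; first by rewrite ler_pdivlMr //; nra.
  by rewrite ltr_pdivrMr //; nra.
by have := sqr_lt_rho2 lt_u; rewrite -rE ltr_pdivlMr //; nra.
Qed.

Lemma cos_theta u : u <= u0 a -> cos (theta a u) = u / rho a u.
Proof.
by case/div_rho_bounds=> lo hi _; rewrite acosK // in_itv /= lo; apply: ltW; lra.
Qed.

Lemma theta_in u : u <= u0 a -> theta a u \in `[0, pi].
Proof.
case/div_rho_bounds=> lo hi _; have le1 : u / rho a u <= 1 by lra.
by rewrite in_itv /= acos_ge0 ?acos_lepi ?lo.
Qed.

Lemma theta_gt u : u <= u0 a -> pi *+ 2 / 3 < theta a u.
Proof.
move=> le_u; have pi_gt0 := pi_gt0 R.
rewrite -ltr_cos ?theta_in // ?cos_theta // ?cos_2pi3; first by case: (div_rho_bounds le_u).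
by rewrite in_itv /= !mulr2n; apply/andP; split; lra.
Qed.

Lemma theta_lt_pi u : u < u0 a -> theta a u < pi.
Proof.
move=> lt_u; have [_ hi /(_ lt_u) lo] := div_rho_bounds (ltW lt_u).
by apply: acos_ltpi; rewrite lo; lra.
Qed.

Lemma theta_homo : {in `]-oo, u0 a] &, {homo theta a : u v / u < v}}.
Proof.
move=> u v; rewrite !in_itv /= => le_u le_v lt_uv.
rewrite -ltr_cos ?theta_in // !cos_theta //.
have := sqr_rho2_cross_lt lt_uv le_v; rewrite -(sqr_rho le_u) -(sqr_rho le_v) => ?.
have [ru_gt0 rv_gt0] := (rho_gt0 le_u, rho_gt0 le_v).
have u_lt0 : u < 0 by have := u0_le; lra.
have v_lt0 : v < 0 by have := u0_le; lra.
have [vA uB] : v * rho a u < 0 /\ u * rho a v < 0 by rewrite !pmulr_llt0.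
by rewrite ltr_pdivrMr // mulrAC ltr_pdivlMr //; nra.
Qed.

Lemma theta_mono : {in `]-oo, u0 a] &, {mono theta a : u v / u < v}}.
Proof. exact/leW_mono_in/le_mono_in/theta_homo. Qed.

Lemma exists_sqr_eq_rho2 c : -1 < c -> c < - (1 / 2) ->
  exists2 u, u < u0 a & u ^+ 2 = c ^+ 2 * rho2 a u.
Proof.
move=> c_gt c_lt; have := a_ge; have := a_le; have := u0_le => ? ? ?.
pose p : {poly R} := 'X^2 - (c ^+ 2)%:P * (4%:P * 'X^2 + 2%:P * 'X + a%:P).
have pE x : p.[x] = x ^+ 2 - c ^+ 2 * rho2 a x.
  by rewrite /p /rho2 !(hornerD, hornerN, hornerM, hornerC, hornerX, hornerXn).
have al_gt0 : 0 < 4 * c ^+ 2 - 1 by nra.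
have c2_lt1 : c ^+ 2 < 1 by nra.
have [K [K_gt alK lt_Ku]] : exists K, [/\ 1 < K, 3 < (4 * c ^+ 2 - 1) * K & - K <= u0 a].
  exists (3 / (4 * c ^+ 2 - 1) - u0 a + 1); have := divr_gt0 (ltr0n _ 3) al_gt0.
  split; [lra | | lra].
  by rewrite mulrDr mulrBr mulrCA divff ?gt_eqF // mulr1; nra.
have pK : p.[- K] < 0.
  have h1 : 3 * K < (4 * c ^+ 2 - 1) * K * K by rewrite ltr_pM2r //; lra.
  have h2 : c ^+ 2 * K < K by rewrite gtr_pMl //; lra.
  have h3 : - (a * c ^+ 2) <= c ^+ 2 by rewrite -mulNr ler_piMl ?sqr_ge0 //; lra.
  by rewrite pE /rho2; lra.
have pu0 : 0 < p.[u0 a].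
  have : 0 < u0 a ^+ 2 * (1 - c ^+ 2).
    by rewrite mulr_gt0 ?subr_gt0 // expr2; nra.
  by rewrite pE rho2_u0; nra.
have pKu : p.[- K] * p.[u0 a] < 0 by rewrite nmulr_rlt0.
have [u] := poly_ivtoo lt_Ku pKu.
rewrite in_itv /= => /andP[_ lt_u] /rootP; rewrite pE => /eqP; rewrite subr_eq0 => /eqP.
by exists u.
Qed.

Lemma theta_surj t : pi *+ 2 / 3 < t -> t < pi -> exists2 u, u < u0 a & theta a u = t.
Proof.
move=> t_gt t_lt; have pi_gt0 := pi_gt0 R.
have pi_in : (pi : R) \in `[0, pi] by rewrite in_itv /= lexx ltW.
have t_in : t \in `[0, pi] by rewrite in_itv /= ltW //; move: t_gt; rewrite mulr2n; lra.
have c_gt : -1 < cos t by rewrite -cospi ltr_cos.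
have c_lt : cos t < - (1 / 2).
  rewrite -cos_2pi3 ltr_cos // in_itv /= mulr2n; apply/andP; split; lra.
have [u lt_u uE] := exists_sqr_eq_rho2 c_gt c_lt; exists u => //.
have [_ r_lt _] := div_rho_bounds (ltW lt_u).
have r2 : (u / rho a u) ^+ 2 = cos t ^+ 2.
  by rewrite expr_div_n sqr_rho ?uE ?mulfK ?gt_eqF ?rho2_gt0 // ltW.
have : (u / rho a u - cos t) * (u / rho a u + cos t) = 0.
  by rewrite -subr_sqr r2 subrr.
move/eqP; rewrite mulf_eq0 => /orP[/eqP/subr0_eq rE | /eqP]; last by lra.
by rewrite /theta rE cosK.
Qed.

Lemma zeta_surj y : y <= Ia_end a -> exists2 u, u <= u0 a & zeta a u = y.
Proof.
move=> le_y; have := a_ge; have := u0_le; have := normr_ge0 y => ? ? ?.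
pose q : {poly R} := (1 + 2%:P * 'X) * (4%:P * 'X^2 + 2%:P * 'X + a%:P) - y%:P.
have qE u : q.[u] = zeta a u - y.
  by rewrite /q /zeta /rho2 !(hornerD, hornerN, hornerM, hornerC, hornerX, hornerXn).
pose U := Num.min (- (`|y| + 3)) (u0 a).
have [U_le U_le_u0] : U <= - (`|y| + 3) /\ U <= u0 a by split; rewrite ge_min lexx ?orbT.
have qU : q.[U] <= 0.
  have y_ge : - `|y| <= y := lerNnormlW (lexx _).
  have r_ge : 1 <= rho2 a U by rewrite /rho2; nra.
  by rewrite qE /zeta; nra.
have qu0 : 0 <= q.[u0 a] by rewrite qE zeta_u0 subr_ge0.
have qUu : q.[U] <= 0 <= q.[u0 a] by rewrite qU.
have [u] := poly_ivt U_le_u0 qUu.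
by move=> /andP[_ le_u] /rootP; rewrite qE => /eqP; rewrite subr_eq0 => /eqP; exists u.
Qed.

Lemma lucasU_at_grid m j u : u < u0 a -> theta a u = grid m j ->
  lucasU (2 * u) (rho2 a u) m.+2 = 0 /\
  lucasU (2 * u) (rho2 a u) m.+1 = - (-1) ^+ j * rho a u ^+ m.
Proof.
move=> lt_u tu; have le_u := ltW lt_u; pose U := lucasU (2 * u) (rho2 a u).
have t_grid : theta a u *+ m.+2 = pi *+ j by rewrite tu grid_mulrn.
have r_gt0 := rho_gt0 le_u.
have sin_gt0 : 0 < sin (theta a u).
  apply: sin_gt0_pi; rewrite theta_lt_pi // andbT.
  by have := theta_gt le_u; have := pi_gt0 R; rewrite mulr2n; lra.
have U_trig n : rho a u * U n * sin (theta a u) = rho a u ^+ n * sin (theta a u *+ n).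
  rewrite -lucasU_trig (sqr_rho le_u); congr (_ * lucasU (2 * _) _ _ * _).
  by rewrite (cos_theta le_u) mulrCA divff ?mulr1 ?gt_eqF.
split.
  have := U_trig m.+2; rewrite t_grid sin_pi_mulrn mulr0 => /eqP.
  by rewrite !mulf_eq0 (gt_eqF r_gt0) (gt_eqF sin_gt0) orbF => /eqP.
have := U_trig m.+1.
have -> : theta a u *+ m.+1 = pi *+ j - theta a u.
  by rewrite -t_grid [_ *+ m.+2]mulrS; ring.
rewrite sinB sin_pi_mulrn cos_pi_mulrn mul0r sub0r => e.
apply: (mulIf (negbT (gt_eqF sin_gt0))); apply: (mulfI (negbT (gt_eqF r_gt0))) => /=.
by rewrite mulrA e exprS; ring.
Qed.

Lemma H_sign_grid m j u : u < u0 a -> theta a u = grid m j ->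
  (-1) ^+ j * (H a m).[zeta a u] < 0.
Proof.
move=> lt_u tu; have [U2 U1] := lucasU_at_grid lt_u tu.
have := H_zeta_lucasU a u m; rewrite U2 U1 mulr0 subr0; set s := -1 - 2 * u => key.
have rhoE := sqr_rho (ltW lt_u).
have D_gt0 : 0 < s ^+ 2 - 2 * u * s + rho2 a u.
  by have := sqr_lt_rho2 lt_u; have := a_le; rewrite /s /rho2; nra.
have s_lt : `|s| < rho a u.
  have := rho_gt0 (ltW lt_u); have := sqr_1D2u_lt_rho2 lt_u.
  by rewrite ltr_norml -rhoE /s; nra.
have sj_lt : (-1) ^+ j * s ^+ m.+2 < rho a u ^+ m.+2.
  by apply: le_lt_trans (ler_norm _) _; rewrite normrMsign normrX ltrXn2r ?normr_ge0.
have e : (-1) ^+ j * (-1) ^+ j = 1 :> R by rewrite -expr2 sqrr_sign.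
suff : (-1) ^+ j * ((H a m).[zeta a u] * (s ^+ 2 - 2 * u * s + rho2 a u)) < 0.
  by rewrite mulrA pmulr_llt0.
rewrite key.
have -> : (-1) ^+ j * (s ^+ m.+2 + rho2 a u * (- (-1) ^+ j * rho a u ^+ m)) =
    (-1) ^+ j * s ^+ m.+2 - (-1) ^+ j * (-1) ^+ j * rho a u ^+ m.+2.
  by rewrite -rhoE !exprS; ring.
by rewrite e mul1r subr_lt0.
Qed.

Lemma sign_change_grid m j u v : u < u0 a -> v < u0 a ->
  theta a u = grid m j -> theta a v = grid m j.+1 ->
  sign_change (H a m) (zeta a u) (zeta a v).
Proof.
move=> lt_u lt_v tu tv; apply/andP; split.
  have [mu mv] : u \in `]-oo, u0 a] /\ v \in `]-oo, u0 a] by rewrite !in_itv /= !ltW.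
  by rewrite (zeta_mono mu mv) -(theta_mono mu mv) tu tv grid_ltS.
exact: mul_lt0_alt_sign (H_sign_grid lt_u tu) (H_sign_grid lt_v tv).
Qed.

Lemma grid_path m j n : (2 * m.+2 < 3 * j)%N -> (j + n < m.+2)%N ->
  exists2 u, u < u0 a /\ theta a u = grid m j &
    exists2 s, size s = n &
      path (sign_change (H a m)) (zeta a u) s /\ last (zeta a u) s <= Ia_end a.
Proof.
elim: n j => [|n IH] j lo hi; have lt_jm : (j < m.+2)%N by lia.
  have [u lt_u tu] := theta_surj (grid_gt lo) (grid_lt_pi lt_jm).
  exists u; first by split.
  by exists [::] => //; split => //=; apply/ltW/zeta_lt_Ia_end.
have lo' : (2 * m.+2 < 3 * j.+1)%N by lia.
have hi' : (j.+1 + n < m.+2)%N by rewrite addSnnS.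
have [v [lt_v tv] [s ss [ps ls]]] := IH j.+1 lo' hi'.
have [u lt_u tu] := theta_surj (grid_gt lo) (grid_lt_pi lt_jm).
exists u; first by split.
exists (zeta a v :: s); first by rewrite /= ss.
by rewrite /= ps (sign_change_grid lt_u lt_v tu tv).
Qed.

(* For m = 3d + r the grid angles in (2pi/3, pi) are j pi/(m+2) with
   2d + 3 <= j <= 3d + 3 if r = 2, and 2d + r + 2 <= j <= 3d + r + 1 otherwise;
   in the latter case the missing sign change is the one at -oo. *)
Lemma H_sign_changes m : exists x s,
  [/\ (size (H a m) <= (size s).+1)%N, path (sign_change (H a m)) x s & last x s <= Ia_end a].
Proof.
have [d [r [lt_r3 ->]]] : exists d r, (r < 3)%N /\ m = (3 * d + r)%N.
  by exists (m %/ 3)%N, (m %% 3)%N; rewrite ltn_mod [in RHS]mulnC -divn_eq.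
have [[s0 s1 s2] _] := size_coef_H a d.
have [lt_r2 | ge_r2] := ltnP r 2; last first.
  have -> : r = 2%N by lia.
  have lo : (2 * (3 * d + 2).+2 < 3 * (2 * d + 3))%N by lia.
  have hi : (2 * d + 3 + d < (3 * d + 2).+2)%N by lia.
  have [u _ [s ss [ps ls]]] := grid_path lo hi.
  by exists (zeta a u), s; split; rewrite // ss addn2.
have size_r : (size (H a (3 * d + r)) <= d.+1)%N.
  by case: r lt_r2 {lt_r3} => [|[|]] // _; rewrite ?addn0 ?addn1.
case: d size_r {s0 s1 s2} => [|k] size_r; first by exists (Ia_end a), [::].
have lo : (2 * (3 * k.+1 + r).+2 < 3 * (r + 2 * k.+2))%N by lia.
have hi : (r + 2 * k.+2 + k < (3 * k.+1 + r).+2)%N by lia.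
have [u [lt_u tu] [s ss [ps ls]]] := grid_path lo hi.
have [y lt_y Hy] := H_sign_minfty a k.+1 (zeta a u) lt_r2.
exists y, (zeta a u :: s); split => //=; first by rewrite ss.
rewrite ps andbT /sign_change lt_y /= mulrC.
apply: (@mul_lt0_alt_sign _ r); last by rewrite exprS mulN1r mulNr oppr_lt0.
by have := H_sign_grid lt_u tu; rewrite exprD mulnC exprM sqrr_sign mulr1.
Qed.

Lemma H_roots_real m (w : R[i]) : H a m != 0 ->
  root (map_poly (real_complex R) (H a m)) w ->
  exists2 x : R, w = (x%:C)%C & x <= Ia_end a.
Proof.
move=> H_neq0; have [x [s [sH ps ls]]] := H_sign_changes m.
case/(complex_roots_of_sign_changes H_neq0 sH ps) => r -> le_r.
by exists r => //; exact: le_trans le_r ls.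
Qed.

Lemma H_roots_dense x eps : x <= Ia_end a -> 0 < eps ->
  exists m r, [/\ H a m != 0, root (H a m) r & `|r - x| < eps].
Proof.
move=> le_x eps_gt0; have le_xe : x - eps <= Ia_end a by lra.
have [w1 le_w1 zw1] := zeta_surj le_xe; have [w2 le_w2 zw2] := zeta_surj le_x.
have [m1 m2] : w1 \in `]-oo, u0 a] /\ w2 \in `]-oo, u0 a] by rewrite !in_itv.
have t12 : theta a w1 < theta a w2.
  by rewrite (theta_mono m1 m2) -(zeta_mono m1 m2) zw1 zw2; lra.
have /andP[t1_ge0 _] := theta_in le_w1; have /andP[_ t2_le] := theta_in le_w2.
have [m [j [lo hi]]] := grid_between t1_ge0 t12.
have t1_gt := theta_gt le_w1; have jS := @grid_ltS R m j.
have [u lt_u tu] := theta_surj (lt_trans t1_gt lo) (lt_trans jS (lt_le_trans hi t2_le)).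
have [v lt_v tv] := theta_surj (lt_trans t1_gt (lt_trans lo jS)) (lt_le_trans hi t2_le).
have [mu mv] : u \in `]-oo, u0 a] /\ v \in `]-oo, u0 a] by rewrite !in_itv /= !ltW.
have /andP[lt_zuv sc] := sign_change_grid lt_u lt_v tu tv.
have [r] := poly_ivtoo (ltW lt_zuv) sc; rewrite in_itv /= => /andP[r_gt r_lt] rr.
have z1u : zeta a w1 < zeta a u by rewrite (zeta_mono m1 mu) -(theta_mono m1 mu) tu.
have zv2 : zeta a v < zeta a w2 by rewrite (zeta_mono mv m2) -(theta_mono mv m2) tv.
exists m, r; split => //.
  by apply: contraTneq sc => ->; rewrite !horner0 mulr0 ltxx.
by rewrite ltr_norml; apply/andP; split; lra.
Qed.

End Parametrization.

Unset Implicit Arguments.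

Theorem theorem2p1 (R : realType) (a : R) :
  -1 <= a -> a <= 1 / 3 ->
  (* every (complex) zero of every nonzero H_m is real and lies in I_a *)
  (forall (m : nat) (w : R[i]),
      H a m != 0 -> root (map_poly (real_complex R) (H a m)) w ->
      exists2 x : R, w = (x%:C)%C & x <= Ia_end a) /\
  (* the union of the zero sets is dense in I_a *)
  (forall (x eps : R), x <= Ia_end a -> 0 < eps ->
      exists (m : nat) (r : R),
        [/\ H a m != 0, root (H a m) r & `|r - x| < eps]).
Proof.
move=> a_ge a_le; split; first exact: H_roots_real.
exact: H_roots_dense.
Qed.
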